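(* Let $k\ge 2$ and let $G$ be a finite simple graph admitting a closed neighborhood balanced $k$-coloring $c$ with color classes $V_1,\dots,V_k$. Then for all distinct $i,j\in\{1,\dots,k\}$, $$|E(V_i,V_j)|=\frac{2|E(G)|+|V(G)|}{k^2},$$ and for every $i\in\{1,\dots,k\}$, $$|E(V_i,V_i)|=\frac{2|E(G)|+|V(G)|}{2k^2}-\frac{|V_i|}{2}.$$
   Context: For a vertex $v$, $N[v]=\{v\}\cup\{u : uv\in E(G)\}$. A closed neighborhood balanced $k$-coloring of $G$ is a map $c: V(G)\to\{1,\dots,k\}$ such that for every vertex $v$ the numbers $|\{u\in N[v] : c(u)=i\}|$, $i=1,\dots,k$, are all equal; its color classes are $V_i=c^{-1}(i)$. For $X,Y\subseteq V(G)$, $E(X,Y)$ is the set of edges joining a vertex of $X$ to a vertex of $Y$; $E(X,X)$ is the set of edges with both endpoints in $X$. *)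

From mathcomp Require Import all_boot all_order all_algebra.
Set Implicit Arguments. Unset Strict Implicit. Unset Printing Implicit Defensive.

Definition simple_graph (T : finType) (e : rel T) : Prop :=
  symmetric e /\ irreflexive e.

Definition closed_nbhd (T : finType) (e : rel T) (v : T) : {set T} :=
  [set u | (u == v) || e v u].

Definition edge_set (T : finType) (e : rel T) : {set {set T}} :=
  [set s : {set T} | [exists x, exists y, e x y && (s == [set x; y])]].

Definition edges_between (T : finType) (e : rel T) (X Y : {set T})
  : {set {set T}} :=
  [set s : {set T} | [exists x in X, exists y in Y, e x y && (s == [set x; y])]].

Definition color_class (T : finType) (k : nat) (c : T -> 'I_k) (i : 'I_k)
  : {set T} := [set v | c v == i].

Definition cnb_coloring (T : finType) (e : rel T) (k : nat) (c : T -> 'I_k)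
  : Prop :=
  forall (v : T) (i j : 'I_k),
    #|closed_nbhd e v :&: color_class c i| = #|closed_nbhd e v :&: color_class c j|.

(* In a closed neighborhood balanced k-coloring every vertex v sees the same
   number share(v) = |N[v]|/k of vertices of each color in N[v]. Counting arcs
   out of V_i therefore gives |E(V_i,V_j)| = S_i := sum_{v in V_i} share(v) for
   j <> i, and 2|E(V_i,V_i)| + |V_i| = S_i, the term |V_i| accounting for v
   itself. Since E(V_i,V_j) = E(V_j,V_i), S_i does not depend on i; summing
   |N[v]| = k share(v) over all v yields 2|E(G)| + |V(G)| = k * k * S_i. *)

From mathcomp Require Import all_boot all_order all_algebra.
From mathcomp Require Import ring.
Import GRing.Theory Num.Theory.

Set Implicit Arguments.
Unset Strict Implicit.
Unset Printing Implicit Defensive.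

Section EdgeCounting.
Variables (T : finType) (e : rel T).

Definition arcs (X Y : {set T}) : {set T * T} :=
  [set p | [&& p.1 \in X, p.2 \in Y & e p.1 p.2]].

Lemma card_arcs (X Y : {set T}) :
  #|arcs X Y| = \sum_(x in X) #|[set y in Y | e x y]|.
Proof.
rewrite -sum1_card.
transitivity (\sum_(x in X) \sum_(y in [set y in Y | e x y]) 1).
  by rewrite pair_big_dep; apply: eq_bigl => -[x y]; rewrite !inE andbA.
by apply: eq_bigr => x _; rewrite sum1_card.
Qed.

Lemma eq_set2 (a b x y : T) : x != y -> [set a; b] = [set x; y] ->
  (a = x /\ b = y) \/ (a = y /\ b = x).
Proof.
move=> nxy eq_ab_xy.
have ha : a \in [set x; y] by rewrite -eq_ab_xy set21.
have hb : b \in [set x; y] by rewrite -eq_ab_xy set22.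
have hx : x \in [set a; b] by rewrite eq_ab_xy set21.
have hy : y \in [set a; b] by rewrite eq_ab_xy set22.
move: ha hb hx hy; rewrite !inE.
case/orP=> /eqP ->; case/orP=> /eqP ->; rewrite ?eqxx ?orbT //=.
- by rewrite eq_sym (negbTE nxy).
- by left.
- by right.
- by rewrite (negbTE nxy).
Qed.

Lemma edges_betweenE (X Y : {set T}) :
  edges_between e X Y = [set [set p.1; p.2] | p in arcs X Y].
Proof.
apply/setP=> s; rewrite inE; apply/existsP/imsetP.
  case=> x /andP[xX /existsP[y /andP[yY /andP[exy /eqP->]]]].
  by exists (x, y) => //; rewrite inE /= xX yY exy.
case=> -[x y]; rewrite inE /= => /and3P[xX yY exy] ->.
by exists x; rewrite xX; apply/existsP; exists y; rewrite yY exy eqxx.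
Qed.

Lemma card_edges_between_disjoint (X Y : {set T}) : [disjoint X & Y] ->
  #|edges_between e X Y| = #|arcs X Y|.
Proof.
move=> dXY; rewrite edges_betweenE.
apply: card_in_imset => -[a b] [x y]; rewrite !inE /=.
move=> /and3P[aX _ _] /and3P[xX yY _].
have nxy : x != y by apply: contraTneq yY => <-; rewrite (disjointFr dXY xX).
case/(eq_set2 nxy) => [[-> ->] // | [ay _]].
by move: (disjointFr dXY aX); rewrite ay yY.
Qed.

Hypotheses (e_sym : symmetric e) (e_irr : irreflexive e).

Lemma card_arcs_within (X : {set T}) :
  #|arcs X X| = 2 * #|edges_between e X X|.
Proof.
rewrite edges_betweenE -sum1_card.
rewrite (partition_big_imset (fun p : T * T => [set p.1; p.2])) /=.
rewrite mulnC -sum_nat_const; apply: eq_bigr => s /imsetP[[x y]].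
rewrite inE /= => /and3P[xX yX exy] ->.
have nxy : x != y by apply: contraTneq exy => ->; rewrite e_irr.
rewrite sum1_card (@eq_card _ _ [set (x, y); (y, x)]); last first.
  move=> -[a b]; rewrite !inE /=; apply/idP/idP.
    case/andP=> _ /eqP /= /(eq_set2 nxy) [[-> ->]|[-> ->]];
      by rewrite eqxx ?orbT.
  case/orP=> /eqP [-> ->]; rewrite unfold_in /= inE /= xX yX ?exy ?eqxx //=.
  by rewrite e_sym exy setUC eqxx.
by rewrite cards2 xpair_eqE (negbTE nxy).
Qed.

Lemma edges_betweenC (X Y : {set T}) :
  edges_between e X Y = edges_between e Y X.
Proof.
suff sub A B : edges_between e A B \subset edges_between e B A.
  by apply/eqP; rewrite eqEsubset !sub.
apply/subsetP=> s; rewrite !inE.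
case/existsP=> x /andP[xA /existsP[y /andP[yB /andP[exy /eqP->]]]].
apply/existsP; exists y; rewrite yB; apply/existsP; exists x.
by rewrite xA e_sym exy setUC eqxx.
Qed.

Lemma edge_setE : edge_set e = edges_between e setT setT.
Proof.
apply/setP=> s; rewrite !inE.
by apply: eq_existsb => x; rewrite in_setT; apply: eq_existsb => y; rewrite in_setT.
Qed.

Lemma card_closed_nbhd v :
  #|closed_nbhd e v| = 1 + #|[set y in setT | e v y]|.
Proof.
have -> : closed_nbhd e v = v |: [set y in setT | e v y].
  by apply/setP=> u; rewrite !inE.
by rewrite cardsU1 !inE /= e_irr.
Qed.

Lemma sum_card_closed_nbhd : \sum_v #|closed_nbhd e v| = 2 * #|edge_set e| + #|T|.
Proof.
under eq_bigr do rewrite card_closed_nbhd.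
rewrite big_split /= sum1_card addnC edge_setE -card_arcs_within card_arcs.
by congr (_ + _); apply: eq_bigl => x; rewrite inE.
Qed.

End EdgeCounting.

Section BalancedColoring.
Variables (T : finType) (e : rel T) (k : nat) (c : T -> 'I_k).
Hypotheses (e_sym : symmetric e) (e_irr : irreflexive e).
Hypothesis c_bal : cnb_coloring e c.

Let V := color_class c.
Let share v := #|closed_nbhd e v :&: V (c v)|.
Let class_share i := \sum_(v in V i) share v.

Lemma card_closed_nbhd_balanced v : #|closed_nbhd e v| = k * share v.
Proof.
rewrite -sum1_card (partition_big c predT) //=.
transitivity (\sum_(j < k) share v); last by rewrite sum_nat_const card_ord.
apply: eq_bigr => j _; rewrite /share (c_bal v (c v) j) -sum1_card.
by apply: eq_bigl => u; rewrite !inE.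
Qed.

Lemma card_nbrs_other_class v j : c v != j ->
  #|[set y in V j | e v y]| = share v.
Proof.
move=> cvj; rewrite /share (c_bal v (c v) j); apply: eq_card => y; rewrite !inE.
by case: (eqVneq y v) => [->|] /=; [rewrite (negbTE cvj) | rewrite andbC].
Qed.

Lemma card_nbrs_own_class v : #|[set y in V (c v) | e v y]| + 1 = share v.
Proof.
rewrite /share; have -> : closed_nbhd e v :&: V (c v) = v |: [set y in V (c v) | e v y].
  apply/setP=> u; rewrite !inE; case: (eqVneq u v) => [->|_] /=.
    by rewrite eqxx.
  by rewrite andbC.
by rewrite cardsU1 !inE /= e_irr andbF addnC.
Qed.

Lemma card_edges_between_classes i j : i != j ->
  #|edges_between e (V i) (V j)| = class_share i.
Proof.
move=> nij; rewrite card_edges_between_disjoint; last first.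
  by rewrite disjoint_subset; apply/subsetP=> v; rewrite !inE => /eqP ->.
rewrite card_arcs; apply: eq_bigr => v; rewrite inE => /eqP cv.
by apply: card_nbrs_other_class; rewrite cv.
Qed.

Lemma card_edges_within_class i :
  2 * #|edges_between e (V i) (V i)| + #|V i| = class_share i.
Proof.
rewrite -card_arcs_within // card_arcs -sum1_card -big_split /=.
by apply: eq_big => // v; rewrite inE => /eqP <-; rewrite card_nbrs_own_class.
Qed.

Lemma class_share_const i j : class_share i = class_share j.
Proof.
have [-> // | nij] := eqVneq i j.
by rewrite -(card_edges_between_classes nij) edges_betweenC //
  card_edges_between_classes // eq_sym.
Qed.

Lemma class_share_total i : k * (k * class_share i) = 2 * #|edge_set e| + #|T|.
Proof.
rewrite -sum_card_closed_nbhd //.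
under eq_bigr do rewrite card_closed_nbhd_balanced.
rewrite -big_distrr /= (partition_big c predT) //=; congr (_ * _).
transitivity (\sum_(j < k) class_share i); first by rewrite sum_nat_const card_ord.
apply: eq_bigr => j _; rewrite (class_share_const i j).
by apply: eq_bigl => v; rewrite !inE.
Qed.

End BalancedColoring.

Local Open Scope ring_scope.

Theorem theorem2p8 (T : finType) (e : rel T) (k : nat) (c : T -> 'I_k) :
  (2 <= k)%N ->
  simple_graph e ->
  cnb_coloring e c ->
  (forall i j : 'I_k, i != j ->
     (#|edges_between e (color_class c i) (color_class c j)|)%:R
       = ((2 * #|edge_set e| + #|T|)%:R / (k ^ 2)%:R : rat))
  /\
  (forall i : 'I_k,
     (#|edges_between e (color_class c i) (color_class c i)|)%:R
       = ((2 * #|edge_set e| + #|T|)%:R / (2 * k ^ 2)%:R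
          - (#|color_class c i|)%:R / 2 : rat)).
Proof.
move=> k_ge2 [e_sym e_irr] c_bal.
have k_neq0 : (k%:R : rat) != 0 by rewrite pnatr_eq0 -lt0n (leq_trans _ k_ge2).
split=> [i j nij | i]; rewrite -(class_share_total e_sym e_irr c_bal i).
  rewrite (card_edges_between_classes c_bal nij) !natrM; field; exact: k_neq0.
rewrite -(card_edges_within_class c e_sym e_irr i) !natrM natrD natrM.
field; exact: k_neq0.
Qed.
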